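(* Let $S\subseteq V$ with $|S|=\zeta$, and let $G$ be a $d$-colored $d$-regular graph on $V$ having a connected component $C$ with $C\subseteq S$ and $|C|\ge(1-\gamma)z$. Then the verifier $\mathcal{A}_{\mathsf{QMA}}$ described below, given the witness $|S\rangle=\frac{1}{\sqrt{|S|}}\sum_{v\in S}|v\rangle$ and oracle access to $G$, accepts with probability at least $1-3\sqrt{\gamma}$.
   Context: $N=2^n$ (sufficiently large), $|V|=N$; $d=100$, $\ell=N^{1/10}$, $\gamma=N^{-1/10}$, $z=N/\ell=N^{9/10}$, $\zeta=(1+\gamma)z$. A $d$-colored $d$-regular graph has exactly one incident edge of each color $\kappa\in[d]$ at each vertex (self-loops allowed); $G(j,\kappa)$ is the $\kappa$-neighbor of $j$, and the oracle is $|j,\kappa,z\rangle\mapsto|j,\kappa,z\oplus G(j,\kappa)\rangle$. Using two oracle calls one implements $U_{\mathrm{walk}}|j,\kappa\rangle=|G(j,\kappa),\kappa\rangle$ (and its controlled version). Let $|\bar 0_V\rangle=N^{-1/2}\sum_{j\in V}|j\rangle$ and $|\bar0_d\rangle=d^{-1/2}\sum_{\kappa\in[d]}|\kappa\rangle$. The verifier $\mathcal{A}_{\mathsf{QMA}}$ on witness register $W$ (state $|\psi\rangle$): prepare a control qubit in $|+\rangle$ and a color register in $|\bar0_d\rangle$; apply $U_{\mathrm{walk}}$ to $(W,\text{color})$ controlled on the control qubit; measure the control in the $\{|+\rangle,|-\rangle\}$ basis and the color register with $\{|\bar0_d\rangle\langle\bar0_d|,I-|\bar0_d\rangle\langle\bar0_d|\}$,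 rejecting unless the outcomes are $+$ and $\bar0_d$; then measure $W$ with $\{|\bar0_V\rangle\langle\bar0_V|,I-|\bar0_V\rangle\langle\bar0_V|\}$, rejecting on the first outcome and accepting otherwise. *)

From mathcomp Require Import all_boot all_order all_algebra all_field.
Set Implicit Arguments. Unset Strict Implicit. Unset Printing Implicit Defensive.
Import Order.TTheory GRing.Theory Num.Theory.
Local Open Scope ring_scope.

(* A d-colored d-regular graph on 'I_N: G j k is the k-neighbour of j.
   Each vertex has exactly one incident edge of each colour, i.e. the
   k-neighbour of the k-neighbour of j is j (self-loops allowed). *)
Definition colored_regular (N d : nat) (G : 'I_N -> 'I_d -> 'I_N) : Prop :=
  forall (j : 'I_N) (k : 'I_d), G (G j k) k = j.

Definition gedge (N d : nat) (G : 'I_N -> 'I_d -> 'I_N) : rel 'I_N :=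
  fun j k => [exists c : 'I_d, G j c == k].

Definition is_component (N d : nat) (G : 'I_N -> 'I_d -> 'I_N)
    (C : {set 'I_N}) : Prop :=
  exists v : 'I_N, C = [set w | connect (gedge G) v w].

Definition ell (N : nat) : algC := 10.-root (N%:R).
Definition gamma (N : nat) : algC := (ell N)^-1.
Definition zpar (N : nat) : algC := N%:R / ell N.
Definition zeta (N : nat) : algC := (1 + gamma N) * zpar N.

Definition app (T : finType) (M : T -> T -> algC) (phi : T -> algC) : T -> algC :=
  fun x => \sum_(y : T) M x y * phi y.

Definition norm2 (T : finType) (phi : T -> algC) : algC :=
  \sum_(x : T) `|phi x| ^+ 2.

Definition ket_plus (b : bool) : algC := (sqrtC 2)^-1.
Definition ket0bar (n : nat) (i : 'I_n) : algC := (sqrtC n%:R)^-1.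
Definition ketS (N : nat) (S : {set 'I_N}) (j : 'I_N) : algC :=
  if j \in S then (sqrtC #|S|%:R)^-1 else 0.

(* Registers: control (bool) * (witness W ('I_N) * colour ('I_d)) *)
Definition reg (N d : nat) := (bool * ('I_N * 'I_d))%type.

Definition init_state (N d : nat) (psi : 'I_N -> algC) (x : reg N d) : algC :=
  ket_plus x.1 * psi x.2.1 * ket0bar x.2.2.

Definition Uwalk (N d : nat) (G : 'I_N -> 'I_d -> 'I_N)
    (x y : 'I_N * 'I_d) : algC :=
  ((G y.1 y.2 == x.1) && (y.2 == x.2))%:R.

Definition CUwalk (N d : nat) (G : 'I_N -> 'I_d -> 'I_N) (x y : reg N d) : algC :=
  if (x.1 == y.1) then (if y.1 then Uwalk G x.2 y.2 else (x.2 == y.2)%:R)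
  else 0.

Definition P_plus_0bar (N d : nat) (x y : reg N d) : algC :=
  ket_plus x.1 * (ket_plus y.1)^* * (x.2.1 == y.2.1)%:R *
  ket0bar x.2.2 * (ket0bar y.2.2)^*.

Definition P_W_perp (N d : nat) (x y : reg N d) : algC :=
  (x.1 == y.1)%:R * (x.2.2 == y.2.2)%:R *
  ((x.2.1 == y.2.1)%:R - ket0bar x.2.1 * (ket0bar y.2.1)^*).

(* Acceptance probability of the verifier A_QMA on witness psi with oracle G:
   squared norm of the (unnormalised) post-measurement state after the outcomes
   (+, 0bar_d) and then "not 0bar_V". *)
Definition accept_prob (N d : nat) (G : 'I_N -> 'I_d -> 'I_N)
    (psi : 'I_N -> algC) : algC :=
  norm2 (app (@P_W_perp N d) (app (@P_plus_0bar N d)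
          (app (CUwalk G) (@init_state N d psi)))).

(* After the controlled walk, projecting the control onto |+> and the colour
   register onto |0bar_d> leaves exactly |+>|L psi>|0bar_d>, where
   L = (I + A/d)/2 is the lazy random walk of G.  The last measurement then
   accepts with probability ||L psi - mean (L psi)||^2
   = sum (L psi)^2 - (sum psi)^2 / N, because every colour permutes V and so
   L preserves sums.  For psi = |S>, L psi is constantly 1/sqrt|S| on the
   component C inside S, so the acceptance probability is at least
   |C|/|S| - |S|/N >= (1 - gamma)/(1 + gamma) - (1 + gamma) gamma, which is
   >= 1 - 3 sqrt gamma once gamma <= 1/16, i.e. once N >= 2^40. *)

From mathcomp Require Import all_boot all_order all_algebra all_field.
From mathcomp Require Import ring.
Set Implicit Arguments. Unset Strict Implicit. Unset Printing Implicit Defensive.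
Import Order.TTheory GRing.Theory Num.Theory.
Local Open Scope ring_scope.

Lemma sumr_delta (R : pzSemiRingType) (T : finType) (a : T) (f : T -> R) :
  \sum_(y : T) (a == y)%:R * f y = f a.
Proof.
rewrite (bigD1 a) //= eqxx mul1r big1 ?addr0 // => y /negbTE.
by rewrite eq_sym => ->; rewrite mul0r.
Qed.

Lemma sum_reg (N d : nat) (F : reg N d -> algC) :
  \sum_(x : reg N d) F x =
  \sum_(b : bool) \sum_(j : 'I_N) \sum_(k : 'I_d) F (b, (j, k)).
Proof.
symmetry.
under eq_bigr => b _ do rewrite (pair_bigA _ (fun j k => F (b, (j, k)))).
rewrite (pair_bigA _ (fun b p => F (b, (p.1, p.2)))) /=.
by apply: eq_bigr; case=> b [j k].
Qed.

Lemma eq_app (T : finType) (M : T -> T -> algC) (phi phi' : T -> algC) :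
  phi =1 phi' -> app M phi =1 app M phi'.
Proof. by move=> E x; apply: eq_bigr => y _; rewrite E. Qed.

Lemma eq_norm2 (T : finType) (phi phi' : T -> algC) :
  phi =1 phi' -> norm2 phi = norm2 phi'.
Proof. by move=> E; apply: eq_bigr => x _; rewrite E. Qed.

Definition inv_sqrtn (n : nat) : algC := (sqrtC n%:R)^-1.

Lemma inv_sqrtn_ge0 n : 0 <= inv_sqrtn n.
Proof. by rewrite invr_ge0 sqrtC_ge0 ler0n. Qed.

Lemma conj_inv_sqrtn n : (inv_sqrtn n)^* = inv_sqrtn n.
Proof. exact: geC0_conj (inv_sqrtn_ge0 n). Qed.

Lemma inv_sqrtn_sqr n : inv_sqrtn n ^+ 2 = n%:R^-1.
Proof. by rewrite exprVn sqrtCK. Qed.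

Definition mean (T : finType) (f : T -> algC) : algC :=
  #|T|%:R^-1 * \sum_(x : T) f x.

Section Projections.

Variables N d : nat.

Lemma P_W_perp_init_state (f : 'I_N -> algC) :
  app (@P_W_perp N d) (@init_state N d f) =1
  @init_state N d (fun j => f j - mean f).
Proof.
case=> b [j k]; rewrite /app sum_reg /mean card_ord.
have term b' j' k' :
    P_W_perp (b, (j, k)) (b', (j', k')) * @init_state N d f (b', (j', k')) =
    (b == b')%:R * ((k == k')%:R * ((j == j')%:R * (ket_plus b' * f j' * ket0bar k')
       - inv_sqrtn N ^+ 2 * (ket_plus b' * f j' * ket0bar k'))).
  rewrite /P_W_perp /init_state /ket0bar /= -/(inv_sqrtn N) conj_inv_sqrtn; ring.
rewrite (eq_bigr _ (fun b' _ => eq_bigr _ (fun j' _ => eq_bigr _ (fun k' _ => term b' j' k')))).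
under eq_bigr => b' _ do under eq_bigr => j' _ do rewrite -mulr_sumr sumr_delta.
under eq_bigr => b' _ do rewrite -mulr_sumr.
rewrite sumr_delta sumrB sumr_delta -mulr_sumr -!mulr_suml inv_sqrtn_sqr.
by rewrite /init_state /= -mulr_sumr; ring.
Qed.

Hypothesis d_gt0 : (0 < d)%N.

Lemma norm2_init_state (f : 'I_N -> algC) :
  norm2 (@init_state N d f) = norm2 f.
Proof.
rewrite /norm2 sum_reg big_bool -big_split /=; apply: eq_bigr => j _.
rewrite -big_split /= /init_state /ket_plus /ket0bar /= -/(inv_sqrtn 2) -/(inv_sqrtn d).
rewrite sumr_const card_ord !normrM !exprMn !(ger0_norm (inv_sqrtn_ge0 _)).
rewrite !inv_sqrtn_sqr -mulr2n -mulrnA -[_ *+ (2 * d)]mulr_natr natrM.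
by field; rewrite pnatr_eq0 -lt0n d_gt0.
Qed.

End Projections.

Section Verifier.

Variables (N d : nat) (G : 'I_N -> 'I_d -> 'I_N).

Definition lazy_walk (psi : 'I_N -> algC) (j : 'I_N) : algC :=
  (2 * d%:R)^-1 * \sum_(k : 'I_d) (psi j + psi (G j k)).

Hypothesis G_regular : colored_regular G.

Lemma CUwalk_init_state (psi : 'I_N -> algC) (x : reg N d) :
  app (CUwalk G) (@init_state N d psi) x =
  inv_sqrtn 2 * inv_sqrtn d * (if x.1 then psi (G x.2.1 x.2.2) else psi x.2.1).
Proof.
case: x => b [j k] /=.
(* y0 is the only basis state that CUwalk sends to (b, (j, k)): G^~ k is an involution. *)
pose y0 : reg N d := if b then (true, (G j k, k)) else (false, (j, k)).
have CU_y0 y : CUwalk G (b, (j, k)) y = (y0 == y)%:R.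
  case: y => b' [j' k']; rewrite /CUwalk /Uwalk /y0 {y0} /=.
  case: b; case: b' => //=; rewrite !xpair_eqE /= [k == k']eq_sym.
  case: (eqVneq k' k) => [->|_]; rewrite ?andbF ?andbT //.
  by rewrite (@can2_eq _ _ (G^~ k) (G^~ k) (G_regular^~ k) (G_regular^~ k)) eq_sym.
rewrite /app (eq_bigr _ (fun y _ => congr1 (fun c => c * _) (CU_y0 y))).
by rewrite sumr_delta /y0 {CU_y0 y0} /init_state; case: b; rewrite /= mulrAC.
Qed.

Lemma P_plus_0bar_walk (psi : 'I_N -> algC) :
  app (@P_plus_0bar N d) (app (CUwalk G) (@init_state N d psi)) =1
  @init_state N d (lazy_walk psi).
Proof.
case=> b [j k]; rewrite /app sum_reg.
pose K := inv_sqrtn 2 ^+ 2 * inv_sqrtn d ^+ 2 * (inv_sqrtn 2 * inv_sqrtn d).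
have term b' j' k' :
    P_plus_0bar (b, (j, k)) (b', (j', k')) *
      app (CUwalk G) (@init_state N d psi) (b', (j', k')) =
    (j == j')%:R * (K * (if b' then psi (G j' k') else psi j')).
  rewrite CUwalk_init_state /P_plus_0bar /ket_plus /ket0bar /=.
  by rewrite -/(inv_sqrtn 2) -/(inv_sqrtn d) !conj_inv_sqrtn /K; ring.
under eq_bigr => b' _ do under eq_bigr => j' _ do
  rewrite (eq_bigr _ (fun k' _ => term b' j' k')) -mulr_sumr.
under eq_bigr => b' _ do rewrite sumr_delta.
rewrite big_bool /= -big_split /= /init_state /ket_plus /ket0bar /=.
rewrite -/(inv_sqrtn 2) -/(inv_sqrtn d) /lazy_walk /K !inv_sqrtn_sqr invfM.
rewrite !big_split /= -!mulr_sumr; ring.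
Qed.

Hypothesis d_gt0 : (0 < d)%N.

Lemma sum_double_div2d (x : algC) : (2 * d%:R)^-1 * \sum_(k < d) (x + x) = x.
Proof.
rewrite sumr_const card_ord -mulr2n -mulrnA -[_ *+ (2 * d)]mulr_natr natrM.
by field; rewrite pnatr_eq0 -lt0n d_gt0.
Qed.

Lemma sum_lazy_walk (psi : 'I_N -> algC) :
  \sum_(j < N) lazy_walk psi j = \sum_(j < N) psi j.
Proof.
have shift k : \sum_(j < N) psi (G j k) = \sum_(j < N) psi j.
  by rewrite [RHS](reindex_inj (@can_inj _ _ (G^~ k) (G^~ k) (G_regular^~ k))).
rewrite /lazy_walk -mulr_sumr exchange_big /=.
under eq_bigr => k _ do rewrite big_split /= shift.
exact: sum_double_div2d.
Qed.

Lemma lazy_walk_ge0 (psi : 'I_N -> algC) j :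
  (forall i, 0 <= psi i) -> 0 <= lazy_walk psi j.
Proof.
move=> psi_ge0; rewrite mulr_ge0 ?invr_ge0 ?mulr_ge0 ?ler0n //.
by apply: sumr_ge0 => k _; rewrite addr_ge0.
Qed.

Lemma component_closed (C : {set 'I_N}) j k :
  is_component G C -> j \in C -> G j k \in C.
Proof.
case=> v ->; rewrite !inE => vj; apply: connect_trans vj (connect1 _).
by apply/existsP; exists k.
Qed.

Lemma lazy_walk_const_on_component (C : {set 'I_N}) (psi : 'I_N -> algC) a :
  is_component G C -> {in C, forall w, psi w = a} ->
  {in C, forall j, lazy_walk psi j = a}.
Proof.
move=> compC psi_a j jC; rewrite /lazy_walk -[RHS]sum_double_div2d.
by congr (_ * _); apply: eq_bigr => k _; rewrite !psi_a ?component_closed.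
Qed.

Lemma accept_probE (psi : 'I_N -> algC) :
  accept_prob G psi =
  norm2 (fun j => lazy_walk psi j - mean (lazy_walk psi)).
Proof.
rewrite /accept_prob -(norm2_init_state d_gt0); apply: eq_norm2 => x.
by rewrite (eq_app _ (P_plus_0bar_walk psi)) P_W_perp_init_state.
Qed.

End Verifier.

Lemma norm2_sub_mean (T : finType) (f : T -> algC) :
  (0 < #|T|)%N -> (forall x, f x \is Num.real) ->
  norm2 (fun x => f x - mean f) =
  \sum_(x : T) f x ^+ 2 - (\sum_(x : T) f x) ^+ 2 / #|T|%:R.
Proof.
move=> T_gt0 f_real; rewrite /norm2.
have m_real : mean f \is Num.real.
  by rewrite rpredM ?rpredV ?realn // rpred_sum.
have sqr_expand x :
    `|f x - mean f| ^+ 2 = f x ^+ 2 - 2 * mean f * f x + mean f ^+ 2.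
  by rewrite real_normK ?rpredB //; ring.
rewrite (eq_bigr _ (fun x _ => sqr_expand x)) !big_split /= sumrN -mulr_sumr sumr_const.
rewrite /mean (_ : #|xpredT| = #|T|) // -[_ *+ #|T|]mulr_natr.
by field; rewrite pnatr_eq0 -lt0n T_gt0.
Qed.

Lemma ketS_ge0 (N : nat) (S : {set 'I_N}) j : 0 <= ketS S j.
Proof. by rewrite /ketS; case: ifP => // _; apply: inv_sqrtn_ge0. Qed.

Lemma sum_ketS_sqr (N : nat) (S : {set 'I_N}) :
  (\sum_(j < N) ketS S j) ^+ 2 = #|S|%:R.
Proof.
rewrite /ketS -big_mkcond /= sumr_const -/(inv_sqrtn #|S|).
case: (posnP #|S|) => [->|S_gt0]; first by rewrite mulr0n expr0n.
rewrite -[inv_sqrtn _ *+ _]mulr_natr exprMn inv_sqrtn_sqr expr2 mulKf //.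
by rewrite pnatr_eq0 -lt0n.
Qed.

Lemma accept_prob_ketS_ge (N d : nat) (G : 'I_N -> 'I_d -> 'I_N)
    (S C : {set 'I_N}) :
  colored_regular G -> (0 < d)%N -> (0 < N)%N ->
  is_component G C -> C \subset S ->
  #|C|%:R / #|S|%:R - #|S|%:R / N%:R <= accept_prob G (ketS S).
Proof.
move=> G_reg d_gt0 N_gt0 compC CS.
have walk_C : {in C, forall j, lazy_walk G (ketS S) j = inv_sqrtn #|S|}.
  apply: lazy_walk_const_on_component => // w wC.
  by rewrite /ketS (subsetP CS w wC).
have sqr_ge : #|C|%:R / #|S|%:R <= \sum_(j < N) lazy_walk G (ketS S) j ^+ 2.
  rewrite (bigID (mem C)) /= -[leLHS]addr0 lerD //; last first.
    by apply: sumr_ge0 => j _; rewrite exprn_ge0 // lazy_walk_ge0 // => i; apply: ketS_ge0.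
  rewrite (eq_bigr _ (fun j jC => congr1 (fun x => x ^+ 2) (walk_C j jC))).
  by rewrite sumr_const inv_sqrtn_sqr mulr_natl.
rewrite accept_probE // norm2_sub_mean ?card_ord //; last first.
  by move=> j; rewrite ger0_real // lazy_walk_ge0 // => i; apply: ketS_ge0.
by rewrite sum_lazy_walk // sum_ketS_sqr lerD2r.
Qed.

Lemma three_sqrt_margin (C : numClosedFieldType) (g c z : C) :
  0 < g -> g <= 16^-1 -> 0 < z -> (1 - g) * z <= c ->
  1 - 3 * sqrtC g <= c / ((1 + g) * z) - (1 + g) * g.
Proof.
move=> g_gt0 g_small z_gt0 hc.
have ratio_ge : 1 - 2 * g <= c / ((1 + g) * z).
  rewrite ler_pdivlMr ?mulr_gt0 ?addr_gt0 // mulrA; apply: le_trans hc.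
  rewrite ler_pM2r // (_ : (1 - 2 * g) * (1 + g) = 1 - g - 2 * g ^+ 2); last by ring.
  by rewrite gerBl mulr_ge0 ?exprn_ge0 ?ltW.
have sqr_le : g ^+ 2 <= g.
  by rewrite expr2 ler_piMl ?ltW // (le_lt_trans g_small) // invf_lt1 ?ltr1n.
have four_le_sqrt : 4 * g <= sqrtC g.
  rewrite -{1}(sqrtCK g) expr2 mulrA ler_piMl ?sqrtC_ge0 ?(ltW g_gt0) //.
  rewrite -(ler_pXn2r (_ : 0 < 2)%N) ?nnegrE ?mulr_ge0 ?sqrtC_ge0 ?(ltW g_gt0) //.
  by rewrite exprMn sqrtCK expr1n -ler_pdivlMl ?exprn_gt0 // mulr1 -natrX.
apply: le_trans (lerD ratio_ge (lexx _)).
rewrite (_ : 1 - 2 * g - (1 + g) * g = 1 - (3 * g + g ^+ 2)); last by ring.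
rewrite lerD2l lerN2; apply: le_trans (lerD (lexx _) sqr_le) _.
rewrite (_ : 3 * g + g = 4 * g); last by ring.
by apply: le_trans four_le_sqrt _; rewrite ler_peMl ?sqrtC_ge0 ?(ltW g_gt0) ?ler1n.
Qed.

Lemma gamma_pow2_bounds (n : nat) : (40 <= n)%N -> 0 < gamma (2 ^ n) <= 16^-1.
Proof.
move=> n_ge40.
have ell_ge16 : 16 <= ell (2 ^ n).
  rewrite -(ler_pXn2r (_ : 0 < 10)%N) ?nnegrE ?rootC_ge0 ?ler0n //.
  by rewrite rootCK // -natrX ler_nat (_ : 16 = 2 ^ 4)%N // -expnM leq_pexp2l.
have ell_gt0 : 0 < ell (2 ^ n) by apply: lt_le_trans ell_ge16.
by rewrite /gamma invr_gt0 ell_gt0 lef_pV2 ?posrE.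
Qed.

Theorem corollary16 :
  exists n0 : nat, forall n : nat, (n0 <= n)%N ->
  forall (G : 'I_(2 ^ n) -> 'I_100 -> 'I_(2 ^ n)),
    colored_regular G ->
  forall (S C : {set 'I_(2 ^ n)}),
    #|S|%:R = zeta (2 ^ n) ->
    is_component G C ->
    C \subset S ->
    (1 - gamma (2 ^ n)) * zpar (2 ^ n) <= #|C|%:R ->
    1 - 3 * sqrtC (gamma (2 ^ n)) <= accept_prob G (ketS S).
Proof.
exists 40 => n n_ge40 G G_reg S C card_S compC CS card_C.
have /andP[g_gt0 g_small] := gamma_pow2_bounds n_ge40.
have N_gt0 : (0 < 2 ^ n)%N by rewrite expn_gt0.
have zparE : zpar (2 ^ n) = gamma (2 ^ n) * (2 ^ n)%:R by rewrite /zpar /gamma mulrC.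
apply: le_trans (accept_prob_ketS_ge G_reg _ N_gt0 compC CS) => //.
rewrite card_S /zeta zparE.
have -> : (1 + gamma (2 ^ n)) * (gamma (2 ^ n) * (2 ^ n)%:R) / (2 ^ n)%:R =
          (1 + gamma (2 ^ n)) * gamma (2 ^ n).
  by field; rewrite pnatr_eq0 -lt0n.
apply: three_sqrt_margin => //; last by rewrite -zparE.
by rewrite mulr_gt0 // ltr0n.
Qed.
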